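(* Assume Hypothesis 1 (stated in the context). Then $\mathrm{soc}(X/K)\ne\mathrm{Alt}_m$.
   Context: $H(m,2)$: vertex set $\mathbb F_2^m$, coordinates indexed by a set $M$, $|M|=m$; $d$ Hamming distance. For a code $C$: covering radius $\rho$, $C_i=\{\alpha:d(\alpha,C)=i\}$. $\mathrm{Aut}(H(m,2))=B\rtimes L$, $B\cong\mathbb Z_2^m$ translations, $L\cong\mathrm{Sym}(M)$; $\mathrm{Aut}(C)$ is the setwise stabiliser of $C$; $C$ is completely transitive if $\mathrm{Aut}(C)$ is transitive on each of $C,C_1,\dots,C_\rho$. For a linear code $D$, $T_D$ is the group of translations by elements of $D$. For $C\ni\mathbf 0$, the maximal linear subcode $C_{\max}$ is the largest linear subcode $D\subseteq C$ with $T_D\le\mathrm{Aut}(C)$. Hypothesis 1: $C$ is a completely transitive code in $H(m,2)$ with $\mathbf 0\in C$ and minimum distance $\delta\ge5$; $X=\mathrm{Aut}(C)$; $C_{\max}$ the maximal linear subcode; $X_{\max}$ the setwise stabiliser of $C_{\max}$ in $X$; $2\le\dim C_{\max}\le m-2$. $K=X\cap B$ is the kernel of the action of $X$ on $M$, so $X/K$ is regarded as a permutation group on $M$; $\mathrm{soc}$ denotes the socle (product of all minimal normal subgroups). *)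

From HB Require Import structures.
From mathcomp Require Import all_boot all_order all_algebra all_fingroup all_solvable.
Set Implicit Arguments. Unset Strict Implicit. Unset Printing Implicit Defensive.
Import GRing.Theory.
Local Open Scope ring_scope.

(* Vertices of H(m,2): row vectors F_2^m; coordinate set M = 'I_m. *)
Definition vert (m : nat) := 'rV['F_2]_m.

Definition hdist m (x y : vert m) : nat := #|[set i : 'I_m | x 0 i != y 0 i]|.

Definition pvec m (s : {perm 'I_m}) (x : vert m) : vert m :=
  \row_i x 0 ((s^-1)%g i).

(* Aut(H(m,2)) = B x| L : maps x |-> x^s + b. *)
Definition hamAut m : {set {perm vert m}} :=
  [set g : {perm vert m} | [exists s : {perm 'I_m}, [exists b : vert m,
            [forall x, g x == pvec s x + b]]]].

Definition translB m : {set {perm vert m}} :=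
  [set g : {perm vert m} | [exists b : vert m, [forall x, g x == x + b]]].

Definition AutC m (C : {set vert m}) : {set {perm vert m}} :=
  [set g in hamAut m | g @: C == C].

(* d(x, C) (C nonempty; m is an upper bound for all distances). *)
Definition dist_to m (x : vert m) (C : {set vert m}) : nat :=
  \big[minn/m]_(c in C) hdist x c.

Definition covrad m (C : {set vert m}) : nat := \max_(x : vert m) dist_to x C.

Definition Cdist m (C : {set vert m}) (i : nat) : {set vert m} :=
  [set x | dist_to x C == i].

Definition completely_transitive m (C : {set vert m}) : Prop :=
  forall i, (i <= covrad C)%N ->
    forall x y, x \in Cdist C i -> y \in Cdist C i ->
      exists2 g, g \in AutC C & g x = y.

Definition min_dist_ge m (C : {set vert m}) (d : nat) : Prop :=
  forall c c', c \in C -> c' \in C -> c != c' -> (d <= hdist c c')%N.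

Definition linear_code m (D : {set vert m}) : Prop :=
  0 \in D /\ (forall x y, x \in D -> y \in D -> x + y \in D).

Definition transl_in_Aut m (D C : {set vert m}) : Prop :=
  forall d, d \in D -> [set x + d | x in C] = C.

Definition is_Cmax m (C D : {set vert m}) : Prop :=
  [/\ linear_code D, D \subset C, transl_in_Aut D C &
      forall D', linear_code D' -> D' \subset C -> transl_in_Aut D' C ->
                 D' \subset D].

Definition code_dim m (D : {set vert m}) : nat := logn 2 #|D|.

(* X/K regarded as a permutation group on M: the permutations of M
   induced by elements of X (K = X :&: B is the kernel of this action). *)
Definition coord_image m (X : {set {perm vert m}}) : {set {perm 'I_m}} :=
  [set s : {perm 'I_m} | [exists g in X, [exists b : vert m, [forall x, g x == pvec s x + b]]]].

Definition socle (gT : finGroupType) (G : {set gT}) : {set gT} :=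
  <<\bigcup_(N : {group gT} | (N \subset G) && minnormal N G) N>>%g.

From HB Require Import structures.
From mathcomp Require Import all_boot all_order all_algebra all_fingroup all_solvable.
From mathcomp Require Import zify.

Set Implicit Arguments.
Unset Strict Implicit.
Unset Printing Implicit Defensive.
Import GRing.Theory.
Local Open Scope ring_scope.

(* Translations by [Cmax] are automorphisms of [C], and so are their conjugates
   under [Aut(C)]; by maximality of [Cmax], every coordinate permutation induced
   by [Aut(C)] stabilises [Cmax]. If the socle of [X/K] were [Alt_m], the binary
   linear code [Cmax] would thus be [Alt_m]-invariant. Applying a 3-cycle to a
   nonconstant codeword produces a weight-two codeword, and 3-cycles then move
   it to every [e_a + e_b]; so [Cmax] contains the even-weight code and has
   dimension at least [m - 1 > m - 2]. *)

Lemma F2_cases (c : 'F_2) : c = 0 \/ c = 1.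
Proof. by case: c => [[|[|k]]] // lt_k2; [left | right]; apply: val_inj. Qed.

Lemma F2_addxx (c : 'F_2) : c + c = 0.
Proof. by apply: addrr_pchar2; apply: pchar_Fp. Qed.

Section CoordinatePermutations.

Variable m : nat.
Implicit Types (x y v : vert m) (s t : {perm 'I_m}) (D : {set vert m}).

Lemma vert_addxx x : x + x = 0.
Proof. by rewrite -mulr2n -scaler_nat pchar_Fp_0 ?scale0r. Qed.

Lemma pvecE s x j : pvec s x 0 j = x 0 (s^-1 j)%g.
Proof. by rewrite mxE. Qed.

Lemma pvecD s x y : pvec s (x + y) = pvec s x + pvec s y.
Proof. by apply/matrixP => i j; rewrite !mxE. Qed.

Lemma pvec0 s : pvec s 0 = 0.
Proof. by apply/matrixP => i j; rewrite !mxE. Qed.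

Lemma pvec1 x : pvec 1 x = x.
Proof. by apply/matrixP => i j; rewrite [i]ord1 pvecE invg1 perm1. Qed.

Lemma pvecM s t x : pvec (s * t) x = pvec t (pvec s x).
Proof. by apply/matrixP => i j; rewrite [i]ord1 !pvecE invMg permM. Qed.

Lemma pvec_delta s (i : 'I_m) : pvec s 'e_i = 'e_(s i).
Proof.
apply/matrixP => k j; rewrite [k]ord1 pvecE !mxE.
by rewrite (canF_eq (permKV s)).
Qed.

(* [tperm a b * tperm b c] is the 3-cycle a -> c -> b -> a. *)
Lemma pvec_3cycle_add v (a b c : 'I_m) :
  a != b -> b != c -> c != a ->
  v + pvec (tperm a b * tperm b c) v =
    (v 0 a + v 0 b) *: 'e_a + (v 0 b + v 0 c) *: 'e_b + (v 0 c + v 0 a) *: 'e_c.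
Proof.
move=> ab bc ca; apply/matrixP => i j; rewrite [i]ord1 !mxE invMg !tpermV permM.
have [ba cb ac] : [/\ b != a, c != b & a != c] by split; rewrite eq_sym.
have [-> | ja] := eqVneq j a.
  rewrite (tpermD ba ca) tpermL eqxx (negbTE ab) (negbTE ac).
  by rewrite /= mulr1 !mulr0 !addr0.
have [-> | jb] := eqVneq j b.
  rewrite tpermL (tpermD ac bc) eqxx (negbTE bc).
  by rewrite /= mulr1 !mulr0 add0r addr0.
have [-> | jc] := eqVneq j c.
  rewrite tpermR tpermR eqxx.
  by rewrite /= mulr1 !mulr0 !add0r addrC.
rewrite !tpermD 1?eq_sym //.
by rewrite /= !mulr0 !addr0 F2_addxx.
Qed.

Definition code_stab D : {set {perm 'I_m}} :=
  [set s | [forall x in D, pvec s x \in D]].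

Lemma code_stab_group_set D : group_set (code_stab D).
Proof.
apply/group_setP; split.
  by rewrite inE; apply/forall_inP => x Dx; rewrite pvec1.
move=> s t; rewrite !inE => /forall_inP sD /forall_inP tD.
by apply/forall_inP => x Dx; rewrite pvecM tD ?sD.
Qed.

Canonical code_stab_group D := Group (code_stab_group_set D).

End CoordinatePermutations.

Section LinearCodes.

Variables (m : nat) (D : {set vert m}).
Implicit Types x y : vert m.
Hypothesis linD : linear_code D.

Lemma linear_code0 : 0 \in D.
Proof. by case: linD. Qed.

Lemma linear_codeD x y : x \in D -> y \in D -> x + y \in D.
Proof. by case: linD => _; apply. Qed.

Lemma linear_codeZ (c : 'F_2) x : x \in D -> c *: x \in D.
Proof. by case: (F2_cases c) => -> Dx; rewrite ?scale0r ?scale1r ?linear_code0. Qed.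

Lemma linear_code_sum (I : finType) (F : I -> vert m) :
  (forall i, F i \in D) -> \sum_i F i \in D.
Proof.
by move=> DF; apply: (big_ind [in D]); [apply: linear_code0 | apply: linear_codeD |].
Qed.

Lemma linear_code_pvec (s : {perm 'I_m}) : linear_code (pvec s @: D).
Proof.
split; first by apply/imsetP; exists 0; rewrite ?pvec0 ?linear_code0.
move=> _ _ /imsetP[x Dx ->] /imsetP[y Dy ->].
by rewrite -pvecD imset_f ?linear_codeD.
Qed.

Lemma linear_code_index2_logn (e : vert m) :
  (forall x, x \in D \/ x + e \in D) -> (m.-1 <= logn 2 #|D|)%N.
Proof.
move=> cover.
have cardT : #|[set: vert m]| = (2 ^ m)%N by rewrite cardsT card_mx card_Fp // mul1n.
have [De | notDe] := boolP (e \in D).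
  suff -> : D = [set: vert m] by rewrite cardT pfactorK // leq_pred.
  apply/setP => x; rewrite inE; case: (cover x) => // Dxe.
  by rewrite -[x]addr0 -(vert_addxx e) addrA linear_codeD.
pose De := [set y + e | y in D].
have cardDe : #|De| = #|D| by rewrite card_imset //; apply: addIr.
have DUDe : D :|: De = [set: vert m].
  apply/setP => x; rewrite !inE; case: (cover x) => [-> // | Dxe].
  by apply/orP; right; apply/imsetP; exists (x + e); rewrite // -addrA vert_addxx addr0.
have DIDe : D :&: De = set0.
  apply/setP => x; rewrite !inE; apply/andP => -[Dx /imsetP[y Dy xE]].
  by move: notDe; rewrite -[e]add0r -(vert_addxx y) -addrA -xE linear_codeD.
have D_gt0 : (0 < #|D|)%N by apply/card_gt0P; exists 0; apply: linear_code0.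
have := cardsU D De; rewrite DUDe DIDe cards0 subn0 cardDe addnn cardT -mul2n => cardD.
have := congr1 (logn 2) cardD; rewrite lognM // pfactorK // logn_prime // eqxx.
lia.
Qed.

End LinearCodes.

Lemma card_gt2_nonconstant m (D : {set vert m}) :
  (2 < #|D|)%N -> exists v a b, [/\ v \in D, v 0 a = 1 & v 0 b = 0].
Proof.
move=> D_gt2.
have [v Dv] : exists2 v, v \in D & v \notin [set 0; const_mx 1].
  apply/subsetPn; apply: contraTN D_gt2 => /subset_leq_card D_le2.
  by rewrite -leqNgt (leq_trans D_le2) // cards2 ltnS leq_b1.
rewrite !inE negb_or => /andP[v_neq0 v_neq1].
have [a /eqP va] : exists a, v 0 a == 1.
  apply/existsP; apply: contraR v_neq0 => /existsPn v_ne1.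
  by apply/eqP/rowP => j; rewrite mxE; case: (F2_cases (v 0 j)) (v_ne1 j) => ->.
have [b /eqP vb] : exists b, v 0 b == 0.
  apply/existsP; apply: contraR v_neq1 => /existsPn v_ne0.
  by apply/eqP/rowP => j; rewrite mxE; case: (F2_cases (v 0 j)) (v_ne0 j) => ->.
by exists v, a, b.
Qed.

Section AltInvariantCodes.

Variables (m : nat) (D : {set vert m}).
Hypotheses (linD : linear_code D) (altD : ('Alt_('I_m))%g \subset code_stab D).

Lemma tperm_chain_Alt (a b c : 'I_m) :
  a != b -> b != c -> (tperm a b * tperm b c)%g \in ('Alt_('I_m))%g.
Proof. by move=> ab bc; rewrite Alt_even odd_permM !odd_tperm ab bc. Qed.

Lemma alt_code_pvec (a b c : 'I_m) x :
  a != b -> b != c -> x \in D -> pvec ((tperm a b * tperm b c)%g) x \in D.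
Proof.
move=> ab bc Dx; have := subsetP altD _ (tperm_chain_Alt ab bc).
by rewrite inE => /forall_inP; apply.
Qed.

Lemma alt_code_weight2_move (a b c : 'I_m) :
  a != b -> b != c -> c != a -> 'e_a + 'e_b \in D -> 'e_a + 'e_c \in D.
Proof.
move=> ab bc ca Dab; have := alt_code_pvec ab bc Dab.
rewrite pvecD !pvec_delta !permM tpermL tpermR tpermL (tpermD _ ca) 1?eq_sym //.
by rewrite addrC.
Qed.

Lemma alt_code_weight2_all (a b : 'I_m) :
  a != b -> 'e_a + 'e_b \in D -> forall c, 'e_a + 'e_c \in D.
Proof.
move=> ab Dab c; have [-> | ca] := eqVneq c a; first by rewrite vert_addxx linear_code0.
have [-> // | cb] := eqVneq c b.
by apply: alt_code_weight2_move Dab; rewrite // eq_sym.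
Qed.

Lemma alt_code_has_weight2 v (a b c : 'I_m) :
  a != b -> b != c -> c != a -> v \in D -> v 0 a = 1 -> v 0 b = 0 ->
  exists2 x, x != a & 'e_a + 'e_x \in D.
Proof.
move=> ab bc ca Dv va vb.
have := linear_codeD linD Dv (alt_code_pvec ab bc Dv).
rewrite pvec_3cycle_add // va vb addr0 add0r scale1r.
case: (F2_cases (v 0 c)) => ->.
  by rewrite add0r scale0r addr0 scale1r; exists c.
by rewrite F2_addxx scale0r addr0 scale1r; exists b; rewrite // eq_sym.
Qed.

Lemma alt_code_cover (a : 'I_m) :
  (forall y, 'e_a + 'e_y \in D) -> forall x, x \in D \/ x + 'e_a \in D.
Proof.
move=> Da x.
have := linear_code_sum linD (fun j => linear_codeZ linD (x 0 j) (Da j)).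
rewrite (eq_bigr _ (fun j _ => scalerDr _ _ _)) big_split /= -scaler_suml -row_sum_delta.
case: (F2_cases (\sum_j x 0 j)) => ->; rewrite ?scale0r ?add0r ?scale1r 1?addrC.
  by left.
by right.
Qed.

Lemma alt_code_logn_ge : (2 < m)%N -> (2 < #|D|)%N -> (m.-1 <= logn 2 #|D|)%N.
Proof.
move=> m_gt2 D_gt2.
have [v [a [b [Dv va vb]]]] := card_gt2_nonconstant D_gt2.
have ab : a != b by apply: contra_eq_neq va => ->; rewrite vb eq_sym oner_eq0.
have [c] : exists c, c \notin [set a; b].
  apply/existsP; rewrite -negb_forall; apply/negP => /forallP allab.
  have : (#|[set: 'I_m]| <= #|[set a; b]|)%N.
    by apply/subset_leq_card/subsetP => j _; apply: allab.
  by rewrite cardsT card_ord cards2 ab; lia.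
rewrite !inE negb_or => /andP[ca cb].
have bc : b != c by rewrite eq_sym.
have [x xa Dax] := alt_code_has_weight2 ab bc ca Dv va vb.
apply: (linear_code_index2_logn linD (e := 'e_a)); apply: alt_code_cover.
by apply: alt_code_weight2_all Dax; rewrite eq_sym.
Qed.

End AltInvariantCodes.

Section MaximalLinearSubcode.

Variables (m : nat) (C : {set vert m}).

Lemma transl_in_Aut_sub D : (0 : vert m) \in C -> transl_in_Aut D C -> D \subset C.
Proof.
move=> C0 trD; apply/subsetP => d Dd; rewrite -(trD d Dd).
by apply/imsetP; exists 0; rewrite ?add0r.
Qed.

Lemma transl_in_Aut_pvec D g s b :
  g \in AutC C -> (forall x, g x = pvec s x + b) ->
  transl_in_Aut D C -> transl_in_Aut (pvec s @: D) C.
Proof.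
rewrite inE => /andP[_ /eqP gC] gE trD _ /imsetP[d Dd ->].
rewrite -{1}gC -imset_comp -{2}gC -{2}(trD d Dd) -imset_comp.
by apply: eq_imset => z /=; rewrite !gE pvecD addrAC.
Qed.

Lemma coord_image_sub_code_stab Cmax :
  (0 : vert m) \in C -> is_Cmax C Cmax -> coord_image (AutC C) \subset code_stab Cmax.
Proof.
move=> C0 [linM _ trM maxM]; apply/subsetP => s.
rewrite inE => /existsP[g /andP[Xg /existsP[b /forallP/(_ _)/eqP gE]]].
have trMs := transl_in_Aut_pvec Xg gE trM.
have /subsetP sMs := maxM _ (linear_code_pvec linM s) (transl_in_Aut_sub C0 trMs) trMs.
by rewrite inE; apply/forall_inP => x Mx; rewrite sMs ?imset_f.
Qed.

End MaximalLinearSubcode.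

Lemma socle_sub (gT : finGroupType) (G : {set gT}) (H : {group gT}) :
  G \subset H -> socle G \subset H.
Proof.
move=> sGH; rewrite gen_subG; apply/bigcupsP => N /andP[sNG _].
exact: subset_trans sNG sGH.
Qed.

Theorem lemma4p1 (m : nat) (C Cmax : {set vert m}) :
  (0 : vert m) \in C ->
  completely_transitive C ->
  min_dist_ge C 5 ->
  is_Cmax C Cmax ->
  (2 <= code_dim Cmax <= m - 2)%N ->
  socle (coord_image (AutC C)) != Alt 'I_m.
Proof.
move=> C0 _ _ CmaxC /andP[dim_ge2 dim_le]; apply/negP => /eqP socAlt.
have altM : ('Alt_('I_m) \subset code_stab Cmax)%g.
  by rewrite -socAlt socle_sub ?coord_image_sub_code_stab.
have [linM _ _ _] := CmaxC.
have M_gt0 : (0 < #|Cmax|)%N by apply/card_gt0P; exists 0; apply: linear_code0.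
have M_gt2 : (2 < #|Cmax|)%N.
  have : (2 ^ 2 %| #|Cmax|)%N by rewrite pfactor_dvdn.
  by move/(dvdn_leq M_gt0); apply: leq_trans.
have m_gt2 : (2 < m)%N by lia.
have := alt_code_logn_ge linM altM m_gt2 M_gt2.
rewrite /code_dim in dim_le; lia.
Qed.
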